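(* Let $M\in\mathbb{R}^{m\times n}$ with $m\le n$ and $\operatorname{rank}(M)=r$, and let $\delta\in(0,1)$. Suppose Algorithm MC-NUS (described in the context) is run on $M$ with target rank $r$, the uniform column sampling distribution $p_1=\dots=p_n=1/n$, $d$ sampled columns and $s$ sampled entries per remaining column, where $d\ge 7\mu(r)r\ln(2r/\delta)$ and $s\ge 7\mu(r)r\ln(2rn/\delta)$. Then with probability at least $1-\delta$, the output satisfies $\hat M=M$.
   Context: Notation: for a matrix $B$, $B_{(i)}$ is its $i$-th row and $B^{(j)}$ its $j$-th column; for a (multi)set $\mathcal{O}$ of row indices, $\mathbf{x}_{\mathcal{O}}$ is the vector of entries of $\mathbf{x}$ indexed by $\mathcal{O}$ and $B_{\mathcal{O}}$ is the matrix of rows of $B$ indexed by $\mathcal{O}$ (with repetitions). Write $M=[\mathbf{m}_1,\dots,\mathbf{m}_n]$. Algorithm MC-NUS (inputs: target rank $r>0$, integers $d\ge r$, $s>0$, distribution $\{p_i\}_{i=1}^n$ with $p_i>0$): (1) For $j=1,\dots,d$, independently sample $i_j\in[n]$ with $\Pr[i_j=i]=p_i$; set $\hat{\mathbf{m}}_{i_j}=\mathbf{m}_{i_j}$ and $A^{(j)}=\mathbf{m}_{i_j}/\sqrt{d\,p_{i_j}}$, giving $A\in\mathbb{R}^{m\times d}$. (2) Set $\hat r=\min(r,\operatorname{rank}(A))$ and let $\hat U\in\mathbb{R}^{m\times\hat r}$ consist of the top-$\hat r$ left singular vectors of $A$. (3) For each remaining column $\mathbf{m}_i$, sample a multiset $\mathcal{O}_i$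 of $s$ indices uniformly at random from $[m]$ with replacement, observe $\mathbf{m}_{i,\mathcal{O}_i}$, and set $\hat{\mathbf{m}}_i=\hat U(\hat U_{\mathcal{O}_i}^T\hat U_{\mathcal{O}_i})^{-1}\hat U_{\mathcal{O}_i}^T\mathbf{m}_{i,\mathcal{O}_i}$. Output $\hat M=[\hat{\mathbf{m}}_1,\dots,\hat{\mathbf{m}}_n]$. Incoherence: with $\bar U\in\mathbb{R}^{m\times r}$, $\bar V\in\mathbb{R}^{n\times r}$ the top-$r$ left and right singular vectors of $M$, $\mu(r)=\max\left(\max_{i\in[m]}\frac{m}{r}\|\bar U_{(i)}\|_2^2,\ \max_{i\in[n]}\frac{n}{r}\|\bar V_{(i)}\|_2^2\right)$. *)

From HB Require Import structures.
From mathcomp Require Import all_boot all_order all_algebra.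
From mathcomp Require Import reals exp.
Set Implicit Arguments. Unset Strict Implicit. Unset Printing Implicit Defensive.
Import Order.TTheory GRing.Theory Num.Theory.
Local Open Scope ring_scope.

Definition is_svd (R : realType) (p q : nat) (A : 'M[R]_(p, q))
  (U : 'M[R]_p) (S : 'M[R]_(p, q)) (V : 'M[R]_q) : Prop :=
  [/\ U^T *m U = 1%:M, V^T *m V = 1%:M,
      (forall (i : 'I_p) (j : 'I_q), (i : nat) <> j -> S i j = 0) /\
      (forall (i : 'I_p) (j : 'I_q), 0 <= S i j),
      (forall (i1 i2 : 'I_p) (j1 j2 : 'I_q),
          (i1 : nat) = j1 -> (i2 : nat) = j2 -> (i1 <= i2)%N -> S i2 j2 <= S i1 j1)
    & A = U *m S *m V^T].

Definition first_cols (R : realType) (p k : nat) (U : 'M[R]_p) (W : 'M[R]_(p, k)) : Prop :=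
  (k <= p)%N /\ forall (i : 'I_p) (j : 'I_k) (j' : 'I_p), (j' : nat) = j -> W i j = U i j'.

Definition top_left_sv (R : realType) (p q : nat) (A : 'M[R]_(p, q)) (k : nat)
  (W : 'M[R]_(p, k)) : Prop :=
  exists U S V, is_svd A U S V /\ first_cols U W.

Definition incoherence (R : realType) (m n : nat) (M : 'M[R]_(m, n)) (r : nat) (mu : R) : Prop :=
  exists U S V (Ub : 'M[R]_(m, r)) (Vb : 'M[R]_(n, r)),
    [/\ is_svd M U S V, first_cols U Ub, first_cols V Vb &
      mu = Num.max
             (\big[Num.max/0]_(i < m) (m%:R / r%:R * \sum_(j < r) Ub i j ^+ 2))
             (\big[Num.max/0]_(i < n) (n%:R / r%:R * \sum_(j < r) Vb i j ^+ 2))].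

(* Randomness of MC-NUS: the d sampled column indices i_1..i_d, and for every
   column i a multiset O_i of s row indices (given as an s-tuple of indices);
   O_i is only used for the columns that were not sampled. *)
Definition mcnus_omega (m n d s : nat) : finType :=
  ({ffun 'I_d -> 'I_n} * {ffun 'I_n -> {ffun 'I_s -> 'I_m}})%type.

Definition sampledA (R : realType) (m n : nat) (M : 'M[R]_(m, n)) (d : nat)
  (p : 'I_n -> R) (cols : {ffun 'I_d -> 'I_n}) : 'M[R]_(m, d) :=
  \matrix_(a < m, j < d) (M a (cols j) / Num.sqrt (d%:R * p (cols j))).

Definition is_sampled (n d : nat) (cols : {ffun 'I_d -> 'I_n}) (i : 'I_n) : bool :=
  [exists j, cols j == i].

Definition hatr (R : realType) (m n : nat) (M : 'M[R]_(m, n)) (r d : nat)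
  (p : 'I_n -> R) (cols : {ffun 'I_d -> 'I_n}) : nat :=
  minn r (\rank (sampledA M p cols)).

Definition U_O (R : realType) (m n s k : nat) (U : 'M[R]_(m, k))
  (O : {ffun 'I_n -> {ffun 'I_s -> 'I_m}}) (i : 'I_n) : 'M[R]_(s, k) :=
  \matrix_(t < s, c < k) U (O i t) c.

Definition mcnus_output (R : realType) (m n : nat) (M : 'M[R]_(m, n)) (d s k : nat)
  (cols : {ffun 'I_d -> 'I_n}) (O : {ffun 'I_n -> {ffun 'I_s -> 'I_m}})
  (U : 'M[R]_(m, k)) : 'M[R]_(m, n) :=
  \matrix_(a < m, i < n)
    (if is_sampled cols i then M a i
     else (U *m invmx ((U_O U O i)^T *m U_O U O i) *m (U_O U O i)^T
             *m (\col_(t < s) M (O i t) i)) a ord0).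

(* Success event: for (every valid choice of) U, the algorithm is well defined
   (all U_O^T U_O invertible) and outputs exactly M. *)
Definition mcnus_success (R : realType) (m n : nat) (M : 'M[R]_(m, n)) (r d s : nat)
  (p : 'I_n -> R) (w : mcnus_omega m n d s) : Prop :=
  forall U : 'M[R]_(m, hatr M r p w.1),
    top_left_sv (sampledA M p w.1) U ->
    (forall i : 'I_n, ~~ is_sampled w.1 i ->
        (U_O U w.2 i)^T *m U_O U w.2 i \in unitmx)
    /\ mcnus_output M w.1 w.2 U = M.

(* Exactness is a deterministic consequence of two rank conditions.  Let Ub and
   Vb be the top-r left and right singular vectors of M.  If the sampled rows of
   Vb have rank r, then the sampled matrix A = M C (C selects and rescales
   columns) has the column space of M, and so do its top-r left singular vectors
   U; if moreover, for every remaining column, the sampled rows of Ub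
   (equivalently of U, whose columns span the same space) have rank r, each
   least-squares step is exact.
   For an N x r matrix X with orthonormal columns and squared row norms at most
   c, the squared row norms sum to r while the squared norms of their orthogonal
   projections onto a subspace W sum to rank W; hence at least (r - rank W)/c rows
   lie outside W.  By induction on the number of samples, at most
   r (N - 1/c)^s of the N^s row samples are rank-deficient, a fraction
   r (1 - 1/(mu r))^s <= r exp(-s/(mu r)).  A union bound over the column sample
   and the n row samples gives failure probability at most delta. *)

From HB Require Import structures.
From mathcomp Require Import all_boot all_order all_algebra.
From mathcomp Require Import reals sequences exp.
From mathcomp Require Import ring lra zify.
Import Order.TTheory GRing.Theory Num.Theory.
Local Open Scope ring_scope.
Set Implicit Arguments. Unset Strict Implicit. Unset Printing Implicit Defensive.

Section GramMatrix.
Variable R : realFieldType.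

Lemma mulmx_trmx_diagE p q (A : 'M[R]_(p, q)) i : (A *m A^T) i i = \sum_j A i j ^+ 2.
Proof. by rewrite mxE; apply: eq_bigr => j _; rewrite mxE expr2. Qed.

Lemma mulmx_trmx_diag_ge0 p q (A : 'M[R]_(p, q)) i : 0 <= (A *m A^T) i i.
Proof. by rewrite mulmx_trmx_diagE sumr_ge0 // => j _; rewrite sqr_ge0. Qed.

Lemma mulmx_trmx_eq0 p q (A : 'M[R]_(p, q)) : A *m A^T = 0 -> A = 0.
Proof.
move=> AAt0; apply/matrixP=> i j; rewrite mxE; apply/eqP.
have /eqP := congr1 (fun B : 'M_p => B i i) AAt0.
rewrite mulmx_trmx_diagE mxE psumr_eq0 => [/allP/(_ j (mem_index_enum _))|k _].
  by rewrite sqrf_eq0.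
by rewrite sqr_ge0.
Qed.

Lemma gram_unitmx s k (X : 'M[R]_(s, k)) : \rank X = k -> X^T *m X \in unitmx.
Proof.
move=> rkX; rewrite -row_free_unit; apply: inj_row_free => v vXtX0.
have vXt0 : v *m X^T = 0.
  by apply: mulmx_trmx_eq0; rewrite trmx_mul trmxK mulmxA -(mulmxA v) vXtX0 mul0mx.
by apply/eqP; rewrite -(mulmx_free_eq0 _ (_ : row_free X^T)) ?vXt0 // /row_free mxrank_tr rkX.
Qed.

Lemma mulmx_colspace_id p q q' (P : 'M[R]_p) (A : 'M[R]_(p, q)) (B : 'M[R]_(p, q')) :
  P *m A = A -> (B^T <= A^T)%MS -> P *m B = B.
Proof.
move=> PA /submxP[Z BtZ].
have -> : B = A *m Z^T by rewrite -[B]trmxK BtZ trmx_mul trmxK.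
by rewrite mulmxA PA.
Qed.

End GramMatrix.

Section OrthogonalProjection.
Variables (R : realFieldType) (k r : nat) (W : 'M[R]_(k, r)).
Local Notation Z := (row_base W).

Definition orthoproj : 'M[R]_r := Z^T *m invmx (Z *m Z^T) *m Z.

Let gram_row_base_unit : Z *m Z^T \in unitmx.
Proof. by have := gram_unitmx (X := Z^T); rewrite trmxK mxrank_tr eq_row_base; apply. Qed.

Lemma trmx_orthoproj : orthoproj^T = orthoproj.
Proof.
rewrite /orthoproj; move: (row_base W) => B.
by rewrite !trmx_mul !trmxK trmx_inv trmx_mul trmxK mulmxA.
Qed.

Lemma orthoproj_id p (x : 'M[R]_(p, r)) : (x <= W)%MS -> x *m orthoproj = x.
Proof.
rewrite -(eq_row_base W) => /submxP[y ->].
have -> : y *m Z *m orthoproj = y *m (Z *m Z^T *m invmx (Z *m Z^T)) *m Z.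
  by rewrite /orthoproj !mulmxA.
by rewrite mulmxV // mulmx1.
Qed.

Lemma orthoproj_idem : orthoproj *m orthoproj = orthoproj.
Proof. by rewrite orthoproj_id // -(eq_row_base W) submxMl. Qed.

Lemma mxtrace_orthoproj : \tr orthoproj = (\rank W)%:R.
Proof. by rewrite /orthoproj mxtrace_mulC mulmxA mulmxV // mxtrace1. Qed.

Lemma orthoproj_form_ge0 (x : 'rV[R]_r) : 0 <= (x *m orthoproj *m x^T) 0 0.
Proof.
have -> : x *m orthoproj *m x^T = (x *m orthoproj) *m (x *m orthoproj)^T.
  rewrite trmx_mul trmx_orthoproj (mulmxA (x *m orthoproj)).
  by rewrite -(mulmxA x orthoproj orthoproj) orthoproj_idem.
exact: (mulmx_trmx_diag_ge0 (x *m orthoproj) 0).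
Qed.

End OrthogonalProjection.

Lemma mxrank_mxsub_le (F : fieldType) p q p' q' (f : 'I_p' -> 'I_p) (g : 'I_q' -> 'I_q)
  (A : 'M[F]_(p, q)) : (\rank (mxsub f g A) <= \rank A)%N.
Proof.
rewrite mxsubrc rowsubE; apply: leq_trans (mxrankM_maxr _ _) _.
by rewrite -[A in colsub _ A]mulmx1 -mulmx_colsub mxrankM_maxl.
Qed.

Section SVD.
Variable R : realType.

Lemma first_colsE p k (U : 'M[R]_p) (W : 'M[R]_(p, k)) :
  first_cols U W -> W = U *m pid_mx k.
Proof.
case=> le_kp W_U; apply/matrixP=> a b; rewrite mxE (bigD1 (widen_ord le_kp b)) //=.
rewrite mxE /= eqxx ltn_ord mulr1 big1 ?addr0 => [|c]; first exact: W_U.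
by rewrite mxE -val_eqE /= => /negPf->; rewrite mulr0.
Qed.

Lemma first_cols_orthonormal p k (U : 'M[R]_p) (W : 'M[R]_(p, k)) :
  U^T *m U = 1%:M -> first_cols U W -> W^T *m W = 1%:M.
Proof.
move=> U_orth fcW; have [le_kp _] := fcW.
rewrite (first_colsE fcW) trmx_mul tr_pid_mx -mulmxA (mulmxA U^T) U_orth mul1mx.
by rewrite pid_mx_id // pid_mx_1.
Qed.

Lemma svd_rank p q (A : 'M[R]_(p, q)) U S V : is_svd A U S V -> \rank A = \rank S.
Proof.
case=> U_orth V_orth _ _ ->.
have [_ U_unit] := mulmx1_unit U_orth; have [Vt_unit _] := mulmx1_unit V_orth.
rewrite mxrankMfree ?row_free_unit // -mxrank_tr trmx_mul mxrankMfree ?mxrank_tr //.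
by rewrite row_free_unit unitmx_tr.
Qed.

Lemma svd_row_eq0 p q (A : 'M[R]_(p, q)) U S V (i : 'I_p) (j : 'I_q) :
  is_svd A U S V -> (\rank A <= i)%N -> S i j = 0.
Proof.
move=> svdA; rewrite (svd_rank svdA); case: svdA => _ _ [S_diag S_ge0] S_mono _.
have [eq_ij|ne_ij] := eqVneq (i : nat) j; last by move=> _; apply: S_diag; apply/eqP.
apply: contraTeq; rewrite -ltnNge => Sij_neq0.
have le_ip : (i.+1 <= p)%N by []; have le_iq : (i.+1 <= q)%N by rewrite eq_ij.
have Sij_gt0 : 0 < S i j by rewrite lt_def Sij_neq0 S_ge0.
pose D := mxsub (widen_ord le_ip) (widen_ord le_iq) S.
have D_diag : D = diag_mx (\row_l S (widen_ord le_ip l) (widen_ord le_iq l)).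
  apply/matrixP=> a b; rewrite !mxE; have [->|/eqP ne_ab] := eqVneq a b; first by rewrite mulr1n.
  by rewrite mulr0n S_diag //= => eq_ab; apply: ne_ab; apply: val_inj.
have D_unit : D \in unitmx.
  rewrite D_diag unitmxE det_diag unitfE; apply/prodf_neq0 => l _; rewrite mxE gt_eqF //.
  by apply: lt_le_trans Sij_gt0 (S_mono _ _ _ _ _ _ _) => //=; rewrite -ltnS.
by rewrite -[i.+1](mxrank_unit D_unit) mxrank_mxsub_le.
Qed.

Lemma svd_first_cols_proj p q (A : 'M[R]_(p, q)) U S V k (W : 'M[R]_(p, k)) :
  is_svd A U S V -> \rank A = k -> first_cols U W -> W *m (W^T *m A) = A.
Proof.
move=> svdA rkA fcW; have [le_kp _] := fcW.
have pidS : (pid_mx k : 'M_p) *m S = S.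
  apply/matrixP=> a j; rewrite mxE (bigD1 a) //= big1 => [|b ne_ba]; last first.
    by rewrite mxE (_ : (a : nat) == b = false) ?mul0r //; apply/negbTE; rewrite eq_sym.
  rewrite addr0 mxE eqxx /=; case: ltnP => [_|le_ka]; first by rewrite mul1r.
  by rewrite mul0r (svd_row_eq0 _ svdA) // rkA.
case: svdA => U_orth _ _ _ defA.
rewrite (first_colsE fcW) trmx_mul tr_pid_mx {1}defA !mulmxA -(mulmxA _ U^T U) U_orth mulmx1.
by rewrite -(mulmxA U (pid_mx k)) pid_mx_id // -(mulmxA U) pidS.
Qed.

Lemma is_svd_tr p q (A : 'M[R]_(p, q)) U S V : is_svd A U S V -> is_svd A^T V S^T U.
Proof.
case=> U_orth V_orth [S_diag S_ge0] S_mono defA; split => //.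
- by split=> i j; rewrite mxE; [move=> ne_ij; apply: S_diag => eq_ji; apply: ne_ij | exact: S_ge0].
- by move=> i1 i2 j1 j2 eq1 eq2 le12; rewrite !mxE; apply: S_mono; rewrite -?eq1 -?eq2.
- by rewrite defA !trmx_mul trmxK mulmxA.
Qed.

Lemma top_left_sv_proj p q (A : 'M[R]_(p, q)) k (W : 'M[R]_(p, k)) :
  \rank A = k -> top_left_sv A W -> W^T *m W = 1%:M /\ W *m (W^T *m A) = A.
Proof.
move=> rkA [U [S [V [svdA fcW]]]]; split; last exact: svd_first_cols_proj svdA rkA fcW.
by case: svdA => U_orth _ _ _ _; exact: first_cols_orthonormal fcW.
Qed.

End SVD.

Lemma incoherent_bases (R : realType) m n (M : 'M[R]_(m, n)) r mu :
  \rank M = r -> incoherence M r mu ->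
  exists (Ub : 'M[R]_(m, r)) (Vb : 'M[R]_(n, r)),
    [/\ Ub^T *m Ub = 1%:M, Ub *m (Ub^T *m M) = M
       & forall i, m%:R / r%:R * \sum_k Ub i k ^+ 2 <= mu] /\
    [/\ Vb^T *m Vb = 1%:M, Vb *m (Vb^T *m M^T) = M^T
       & forall i, n%:R / r%:R * \sum_k Vb i k ^+ 2 <= mu].
Proof.
move=> rkM [U [S [V [Ub [Vb [svdM fcU fcV ->]]]]]]; have [U_orth V_orth _ _ _] := svdM.
exists Ub, Vb; split; split.
- exact: first_cols_orthonormal fcU.
- exact: svd_first_cols_proj svdM rkM fcU.
- move=> i; rewrite le_max.
  by rewrite (le_bigmax 0 (fun i => m%:R / r%:R * \sum_(j < r) Ub i j ^+ 2) i).
- exact: first_cols_orthonormal fcV.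
- exact: svd_first_cols_proj (is_svd_tr svdM) (etrans (mxrank_tr M) rkM) fcV.
- move=> i; rewrite le_max orbC.
  by rewrite (le_bigmax 0 (fun i => n%:R / r%:R * \sum_(j < r) Vb i j ^+ 2) i).
Qed.

Lemma rowsub_least_squares (F : fieldType) p k s (U : 'M[F]_(p, k)) (t : 'I_s -> 'I_p)
  (y : 'cV[F]_k) : (rowsub t U)^T *m rowsub t U \in unitmx ->
  U *m invmx ((rowsub t U)^T *m rowsub t U) *m (rowsub t U)^T *m rowsub t (U *m y) = U *m y.
Proof.
move=> G_unit; rewrite -mul_rowsub_mx.
by rewrite -!mulmxA (mulmxA (rowsub t U)^T) mulKmx.
Qed.

Lemma sampledAE (R : realType) m n (M : 'M[R]_(m, n)) d p (cols : {ffun 'I_d -> 'I_n}) :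
  sampledA M p cols = M *m \matrix_(i, j) ((cols j == i)%:R / Num.sqrt (d%:R * p (cols j))).
Proof.
apply/matrixP=> a j; rewrite !mxE (bigD1 (cols j)) //= mxE eqxx mul1r big1 ?addr0 // => i ne_i.
by rewrite mxE eq_sym (negPf ne_i) mul0r mulr0.
Qed.

Section ExactRecovery.
Variables (R : realType) (m n r : nat) (M : 'M[R]_(m, n)).
Variables (Ub : 'M[R]_(m, r)) (Vb : 'M[R]_(n, r)).
Hypotheses (rkM : \rank M = r) (Ub_span : Ub *m (Ub^T *m M) = M).
Hypothesis Vb_span : Vb *m (Vb^T *m M^T) = M^T.

Lemma rank_sampledA d (p : 'I_n -> R) (cols : {ffun 'I_d -> 'I_n}) : (forall i, 0 < p i) ->
  \rank (rowsub cols Vb) = r -> \rank (sampledA M p cols) = r.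
Proof.
move=> p_gt0 rk_cols; rewrite sampledAE.
set C := \matrix_(i, j) _; set D := diag_mx (\row_j (Num.sqrt (d%:R * p (cols j)))^-1).
have VbC : Vb^T *m C = (rowsub cols Vb)^T *m D.
  apply/matrixP=> l j; rewrite mul_mx_diag !mxE (bigD1 (cols j)) //= !mxE eqxx mul1r.
  rewrite big1 ?addr0 // => i ne_i; by rewrite !mxE eq_sym (negPf ne_i) mul0r mulr0.
have D_unit : D \in unitmx.
  rewrite unitmxE det_diag unitfE; apply/prodf_neq0 => j _; rewrite mxE invr_eq0 gt_eqF //.
  by rewrite sqrtr_gt0 mulr_gt0 // ltr0n (leq_ltn_trans _ (ltn_ord j)).
have MVb : M = M *m Vb *m Vb^T.
  by rewrite -[LHS]trmxK -Vb_span !trmx_mul !trmxK.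
have rk_MVb : \rank (M *m Vb) = r.
  by apply/eqP; rewrite eqn_leq rank_leq_col -{1}rkM {1}MVb mxrankM_maxl.
rewrite MVb -mulmxA VbC mulmxA mxrankMfree ?row_free_unit //.
by rewrite mxrankMfree // /row_free mxrank_tr rk_cols.
Qed.

Lemma mcnus_success_of_full_rank d s (p : 'I_n -> R) (w : mcnus_omega m n d s) :
  (forall i, 0 < p i) -> \rank (rowsub w.1 Vb) = r ->
  (forall i, \rank (rowsub (w.2 i) Ub) = r) -> mcnus_success M r p w.
Proof.
case: w => cols O p_gt0 /= rk_cols rk_O.
have rkA := rank_sampledA p_gt0 rk_cols.
rewrite /mcnus_success /= /hatr rkA minnn => U /(top_left_sv_proj rkA) [U_orth U_spanA].
set A := sampledA M p cols in rkA U_spanA.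
(* A = M C has rank r = rank M, so A, M and U all have the same column space. *)
have A_sub_M : (A^T <= M^T)%MS by rewrite /A sampledAE trmx_mul submxMl.
have M_sub_A : (M^T <= A^T)%MS.
  by rewrite -(geq_leqif (mxrank_leqif_sup A_sub_M)) !mxrank_tr rkA rkM.
have U_spanM : U *m (U^T *m M) = M.
  by rewrite mulmxA; apply: mulmx_colspace_id M_sub_A; rewrite -mulmxA.
have rkU : \rank U = r.
  by apply/eqP; rewrite eqn_leq rank_leq_col -{1}(mxrank1 R r) -U_orth mxrankM_maxr.
have U_sub_A : (U^T <= A^T)%MS.
  have A_sub_U : (A^T <= U^T)%MS by rewrite -U_spanA trmx_mul submxMl.
  by rewrite -(geq_leqif (mxrank_leqif_sup A_sub_U)) !mxrank_tr rkA rkU.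
have Ub_spanU : Ub *m (Ub^T *m U) = U.
  rewrite mulmxA; apply: mulmx_colspace_id (submx_trans U_sub_A A_sub_M).
  by rewrite -mulmxA.
have rk_UO i : \rank (U_O U O i) = r.
  have -> : U_O U O i = rowsub (O i) Ub *m (Ub^T *m U).
    by rewrite mul_rowsub_mx Ub_spanU; apply/matrixP=> t c; rewrite !mxE.
  rewrite mxrankMfree ?rk_O // /row_free eqn_leq rank_leq_row /=.
  by rewrite -{1}rkU -{1}Ub_spanU mxrankM_maxr.
split=> [i _|]; first exact: gram_unitmx.
apply/matrixP=> a i; rewrite mxE; case: ifP => // _.
have -> : U_O U O i = rowsub (O i) U by apply/matrixP=> t c; rewrite !mxE.
have U_col : U *m col i (U^T *m M) = col i M by rewrite colE mulmxA -colE U_spanM.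
have -> : \col_t M (O i t) i = rowsub (O i) (U *m col i (U^T *m M)).
  by rewrite U_col; apply/matrixP=> t z; rewrite !mxE.
rewrite rowsub_least_squares; last by have := gram_unitmx (rk_UO i); rewrite /U_O.
by rewrite U_col mxE.
Qed.

End ExactRecovery.

Definition ffun_cons (T : finType) s (i : T) (g : {ffun 'I_s -> T}) : {ffun 'I_s.+1 -> T} :=
  [ffun j => if unlift ord0 j is Some j' then g j' else i].

Lemma sum_ffunS (V : nmodType) (T : finType) s (F : {ffun 'I_s.+1 -> T} -> V) :
  \sum_(f : {ffun 'I_s.+1 -> T}) F f
    = \sum_(i : T) \sum_(g : {ffun 'I_s -> T}) F (ffun_cons i g).
Proof.
rewrite pair_big /= (reindex (fun p : T * {ffun 'I_s -> T} => ffun_cons p.1 p.2)) //.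
exists (fun f : {ffun 'I_s.+1 -> T} => (f ord0, [ffun j => f (lift ord0 j)])).
  move=> [i g] _ /=; congr pair; first by rewrite ffunE unlift_none.
  by apply/ffunP=> j; rewrite !ffunE liftK.
move=> f _; apply/ffunP=> j; rewrite !ffunE.
by case: unliftP => [j'|] ->; rewrite ?ffunE.
Qed.

Lemma rank_adds_col_mx (F : fieldType) k p q n
  (W : 'M[F]_(k, n)) (A : 'M_(p, n)) (B : 'M_(q, n)) :
  \rank (W + col_mx A B)%MS = \rank ((W + A) + B)%MS.
Proof. by rewrite (adds_eqmx (eqmx_refl W) (eqmx_sym (addsmxE A B))) addsmxA. Qed.

Section RowSampling.
Variables (R : realFieldType) (N r : nat) (X : 'M[R]_(N, r)).
Hypothesis X_orthonormal : X^T *m X = 1%:M.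

Lemma sum_row_sqnorm : \sum_i \sum_k X i k ^+ 2 = r%:R.
Proof.
rewrite -[RHS](mxtrace1 R) -X_orthonormal mxtrace_mulC.
by apply: eq_bigr => i _; rewrite mulmx_trmx_diagE.
Qed.

Lemma sum_row_sqnorm_le c : (forall i, \sum_k X i k ^+ 2 <= c) -> r%:R <= c * N%:R.
Proof.
move=> le_c; rewrite -sum_row_sqnorm.
by apply: le_trans (ler_sum _ (fun i _ => le_c i)) _; rewrite sumr_const card_ord mulr_natr.
Qed.

Lemma rank_defect_le_rows_notin (W : 'M[R]_r) c : (forall i, \sum_k X i k ^+ 2 <= c) ->
  (r - \rank W)%:R <= c * \sum_i (~~ (row i X <= W)%MS)%:R.
Proof.
move=> le_c; set P := orthoproj W.
have row_form B i : (row i X *m B *m (row i X)^T) 0 0 = (X *m B *m X^T) i i.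
  by rewrite -row_mul !mxE; apply: eq_bigr => j _; rewrite !mxE.
have row_sqnorm i : (row i X *m (row i X)^T) 0 0 = \sum_k X i k ^+ 2.
  by rewrite mulmx_trmx_diagE; apply: eq_bigr => k _; rewrite mxE.
have sum_row_form : \sum_i (row i X *m P *m (row i X)^T) 0 0 = (\rank W)%:R.
  under eq_bigr do rewrite row_form.
  by rewrite -/(\tr _) mxtrace_mulC mulmxA X_orthonormal mul1mx mxtrace_orthoproj.
(* A row in W contributes |x|^2 - x P x^T = 0 to the difference, any other row at most c. *)
rewrite natrB ?rank_leq_col // -sum_row_sqnorm -sum_row_form -sumrB mulr_sumr.
apply: ler_sum => i _; have [inW|notinW] /= := boolP (row i X <= W)%MS.
  by rewrite orthoproj_id // row_sqnorm subrr mulr0.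
by rewrite mulr1 lerBlDr (le_trans (le_c i)) // lerDl orthoproj_form_ge0.
Qed.

Lemma rowsub_ffun_cons s i (g : {ffun 'I_s -> 'I_N}) :
  rowsub (ffun_cons i g) X = col_mx (row i X) (rowsub g X).
Proof.
apply/matrixP=> j k; rewrite mxE ffunE.
case: unliftP => [j'|] ->.
  have -> : lift ord0 j' = rshift 1 j' by apply: val_inj.
  by rewrite (col_mxEd (row i X)) mxE.
have -> : ord0 = lshift s (ord0 : 'I_1) by apply: val_inj.
by rewrite (col_mxEu (row i X)) mxE.
Qed.

Definition deficient_count s (W : 'M[R]_r) : R :=
  \sum_(t : {ffun 'I_s -> 'I_N}) (\rank (W + rowsub t X)%MS < r)%N%:R.

Lemma deficient_count_le c s (W : 'M[R]_r) : (forall i, \sum_k X i k ^+ 2 <= c) ->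
  deficient_count s W <= (r - \rank W)%:R * (N%:R - c^-1) ^+ s.
Proof.
move=> le_c; elim: s W => [|s IHs] W.
  rewrite /deficient_count expr0 mulr1.
  under eq_bigr do rewrite (flatmx0 (rowsub _ X)) addsmx0.
  rewrite sumr_const card_ffun !card_ord expn0 mulr1n ler_nat.
  by case: ltnP => // ?; rewrite subn_gt0.
have [fullW|defW] := leqP r (\rank W).
  have -> : (r - \rank W)%N = 0%N by apply/eqP; rewrite subn_eq0.
  rewrite mul0r /deficient_count big1 // => t _.
  by rewrite ltnNge (leq_trans fullW) // mxrankS // addsmxSl.
set j := (r - \rank W)%N; set a := N%:R - c^-1.
have cN_ge1 : 1 <= c * N%:R.
  by apply: le_trans (sum_row_sqnorm_le le_c); rewrite ler1n (leq_ltn_trans _ defW).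
have c_gt0 : 0 < c by have := ler0n R N; nra.
have a_ge0 : 0 <= a by rewrite subr_ge0 -(ler_pM2l c_gt0) mulfV ?gt_eqF.
have step i : deficient_count s (W + row i X)%MS
              <= (j%:R - (~~ (row i X <= W)%MS)%:R) * a ^+ s.
  apply: le_trans (IHs _) _; apply: ler_wpM2r; first exact: exprn_ge0.
  have [inW|notinW] /= := boolP (row i X <= W)%MS.
    by move/addsmx_idPl: inW => ->; rewrite subr0.
  have : (\rank W < \rank (W + row i X)%MS)%N.
    by rewrite (ltn_leqif (mxrank_leqif_sup (addsmxSl W (row i X)))) addsmx_sub submx_refl.
  by move=> lt_rW; rewrite -natrB ?ler_nat /j; lia.
rewrite /deficient_count sum_ffunS.
under eq_bigr do under eq_bigr do rewrite rowsub_ffun_cons (rank_adds_col_mx (p := 1) (q := s)).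
apply: le_trans (ler_sum _ (fun i _ => step i)) _.
rewrite -mulr_suml sumrB sumr_const card_ord exprS mulrA.
apply: ler_wpM2r; first exact: exprn_ge0.
rewrite /a mulrBr -(mulr_natr j%:R N) lerB // mulrC ler_pdivrMl //.
exact: rank_defect_le_rows_notin.
Qed.

End RowSampling.

Lemma expr_subrV_le_invr (R : realType) (K L : R) x :
  1 <= K -> 0 < L -> K * ln L <= x%:R -> (1 - K^-1) ^+ x <= L^-1.
Proof.
move=> K_ge1 L_gt0 le_x; have K_gt0 : 0 < K by lra.
apply: (@le_trans _ _ (expR (- K^-1) ^+ x)).
  apply: lerXn2r; rewrite ?nnegrE ?expR_ge0 ?expR_ge1Dx //.
  by rewrite subr_ge0 invf_le1.
rewrite -expRM_natl -{1}(lnK L_gt0) -expRN ler_expR mulrN lerN2.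
by rewrite ler_pdivlMr // mulrC.
Qed.

Section IncoherentRows.
Variables (R : realType) (N r : nat) (X : 'M[R]_(N, r)) (mu : R).
Hypotheses (X_orthonormal : X^T *m X = 1%:M) (r_gt0 : (0 < r)%N).
Hypothesis X_incoherent : forall i, N%:R / r%:R * \sum_k X i k ^+ 2 <= mu.

Lemma row_sqnorm_le_incoherence i : \sum_k X i k ^+ 2 <= mu * r%:R / N%:R.
Proof.
have N_gt0 : 0 < N%:R :> R by rewrite ltr0n (leq_ltn_trans _ (ltn_ord i)).
rewrite ler_pdivlMr //.
have -> : (\sum_k X i k ^+ 2) * N%:R = N%:R / r%:R * (\sum_k X i k ^+ 2) * r%:R.
  by field; rewrite pnatr_eq0 -lt0n.
by rewrite ler_wpM2r ?ler0n.
Qed.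

Let N_gt0 : (0 < N)%N.
Proof.
have := sum_row_sqnorm_le X_orthonormal row_sqnorm_le_incoherence.
by rewrite lt0n; apply: contraTneq => ->; rewrite mulr0 -ltNge ltr0n.
Qed.

Lemma incoherence_ge1 : 1 <= mu.
Proof.
have := sum_row_sqnorm_le X_orthonormal row_sqnorm_le_incoherence.
by rewrite divfK ?pnatr_eq0 -?lt0n // -[X in X <= _]mul1r ler_pM2r ?ltr0n.
Qed.

Lemma card_rowsub_deficient_le (eps : R) s :
  0 < eps -> mu * r%:R * ln (r%:R / eps) <= s%:R ->
  #|[pred t : {ffun 'I_s -> 'I_N} | (\rank (rowsub t X) < r)%N]|%:R
    <= eps * #|{ffun 'I_s -> 'I_N}|%:R.
Proof.
move=> eps_gt0 le_s; set K := mu * r%:R.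
have r_gt0' : 0 < r%:R :> R by rewrite ltr0n.
have K_ge1 : 1 <= K.
  have r_ge1 : 1 <= r%:R :> R by rewrite ler1n.
  by have := incoherence_ge1; rewrite /K; nra.
have := deficient_count_le X_orthonormal s 0 row_sqnorm_le_incoherence.
rewrite mxrank0 subn0 invf_div -{1}(mulr1 N%:R) -mulrBr exprMn.
have -> : deficient_count X s 0
          = #|[pred t : {ffun 'I_s -> 'I_N} | (\rank (rowsub t X) < r)%N]|%:R.
  rewrite -sum1_card natr_sum big_mkcond; apply: eq_bigr => t _.
  by rewrite adds0mx inE; case: ifP.
move/le_trans; apply; rewrite card_ffun !card_ord natrX mulrCA [eps * _]mulrC.
rewrite ler_wpM2l ?exprn_ge0 ?ler0n // -ler_pdivlMl // [_^-1 * eps]mulrC -invf_div.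
by apply: expr_subrV_le_invr => //; rewrite divr_gt0.
Qed.

End IncoherentRows.

Lemma natr_card_sum (R : pzSemiRingType) (T : finType) (P : {pred T}) :
  #|P|%:R = \sum_x (x \in P)%:R :> R.
Proof. by rewrite -sum1_card natr_sum big_mkcond; apply: eq_bigr => x _; case: (x \in P). Qed.

Lemma sum_ffun_app (R : comPzSemiRingType) (I T : finType) (i : I) (g : T -> R) :
  \sum_(f : {ffun I -> T}) g (f i) = #|T|%:R ^+ #|I|.-1 * \sum_x g x.
Proof.
pose G j x := if j == i then g x else 1.
have prodG : \prod_j \sum_x G j x = #|T|%:R ^+ #|I|.-1 * \sum_x g x.
  rewrite (bigD1 i) //= {1}/G eqxx mulrC; congr (_ * _).
  rewrite (eq_bigr (fun _ => #|T|%:R)) => [|j ne_ji]; last by rewrite /G (negPf ne_ji) sumr_const.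
  by rewrite prodr_const cardC1.
rewrite -prodG bigA_distr_bigA; apply: eq_bigr => f _.
by rewrite (bigD1 i) //= /G eqxx big1 ?mulr1 // => j /negPf->.
Qed.

Lemma union_bound_ffun (R : realFieldType) (A I T : finType) (bad1 : pred A) (bad2 : pred T)
  (e1 e2 : R) : #|bad1|%:R <= e1 * #|A|%:R -> #|bad2|%:R <= e2 * #|T|%:R ->
  (1 - e1 - #|I|%:R * e2) * #|{: A * {ffun I -> T}}|%:R
    <= #|[set w : A * {ffun I -> T} | ~~ bad1 w.1 && [forall i, ~~ bad2 (w.2 i)]]|%:R.
Proof.
move=> le_bad1 le_bad2; set Omega := #|{: A * {ffun I -> T}}|%:R.
have card_Omega : Omega = #|A|%:R * #|T|%:R ^+ #|I|.
  by rewrite /Omega card_prod card_ffun natrM natrX.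
have indicator (w : A * {ffun I -> T}) : 1 - (bad1 w.1)%:R - \sum_i (bad2 (w.2 i))%:R
                   <= (~~ bad1 w.1 && [forall i, ~~ bad2 (w.2 i)])%:R :> R.
  case: (bad1 w.1) => /=; first by rewrite subrr sub0r oppr_le0 sumr_ge0.
  have [/forallP good|] := boolP [forall i, ~~ bad2 (w.2 i)].
    by rewrite subr0 big1 ?subr0 // => i _; rewrite (negPf (good i)).
  rewrite negb_forall => /existsP[i]; rewrite negbK => bad_i.
  by rewrite subr0 subr_le0 (bigD1 i) //= bad_i lerDl sumr_ge0.
have sum_bad1 : \sum_(w : A * {ffun I -> T}) (bad1 w.1)%:R <= e1 * Omega.
  rewrite -(pair_big xpredT xpredT (fun a _ => (bad1 a)%:R)) /=.
  under eq_bigr do rewrite sumr_const card_ffun.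
  rewrite sumrMnl -natr_card_sum -(mulr_natr #|bad1|%:R) natrX card_Omega mulrA.
  by rewrite ler_wpM2r ?exprn_ge0.
have sum_bad2 i : \sum_(w : A * {ffun I -> T}) (bad2 (w.2 i))%:R <= e2 * Omega.
  rewrite -(pair_big xpredT xpredT (fun _ (f : {ffun I -> T}) => (bad2 (f i))%:R)) /=.
  rewrite sumr_const (sum_ffun_app i (fun b => (bad2 b)%:R)) -natr_card_sum card_Omega.
  rewrite -(mulr_natr (_ * #|bad2|%:R)).
  apply: le_trans (_ : _ <= #|T|%:R ^+ #|I|.-1 * (e2 * #|T|%:R) * #|A|%:R) _.
    by rewrite ler_wpM2r // ler_wpM2l ?exprn_ge0.
  have -> : #|I| = (#|I|.-1).+1 by rewrite prednK //; apply/card_gt0P; exists i.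
  by rewrite exprSr le_eqVlt; apply/orP; left; apply/eqP; ring.
have sum_bad2_all : \sum_i \sum_(w : A * {ffun I -> T}) (bad2 (w.2 i))%:R
                    <= #|I|%:R * e2 * Omega.
  apply: le_trans (ler_sum _ (fun i _ => sum_bad2 i)) _.
  by rewrite sumr_const -(mulr_natl (e2 * Omega)) mulrA.
rewrite natr_card_sum; under [X in _ <= X]eq_bigr do rewrite inE.
apply: le_trans _ (ler_sum _ (fun w _ => indicator w)).
rewrite !sumrB exchange_big /= sumr_const -/Omega.
lra.
Qed.

Unset Implicit Arguments.

Theorem corollary1 (R : realType) (m n : nat) (M : 'M[R]_(m, n)) (r d s : nat)
  (delta mu : R) :
  (m <= n)%N -> \rank M = r -> (0 < r)%N -> 0 < delta < 1 ->
  incoherence M r mu ->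
  7 * mu * r%:R * ln (2 * r%:R / delta) <= d%:R ->
  7 * mu * r%:R * ln (2 * r%:R * n%:R / delta) <= s%:R ->
  exists G : {set mcnus_omega m n d s},
    (forall w, w \in G -> mcnus_success M r (fun _ => n%:R^-1) w) /\
    (1 - delta) * #|[set: mcnus_omega m n d s]|%:R <= #|G|%:R.
Proof.
move=> le_mn rkM r_gt0 /andP[delta_gt0 delta_lt1] /(incoherent_bases rkM).
case=> Ub [Vb [[Ub_orth Ub_span incU] [Vb_orth Vb_span incV]]] le_d le_s.
have n_gt0 : (0 < n)%N by rewrite (leq_trans r_gt0) // -rkM (leq_trans (rank_leq_row M)).
have mu_ge1 := incoherence_ge1 Ub_orth r_gt0 incU.
have weaken L x : 1 <= L -> 7 * mu * r%:R * ln L <= x -> mu * r%:R * ln L <= x.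
  move=> L_ge1; have : 0 <= mu * r%:R * ln L by rewrite !mulr_ge0 ?ln_ge0 //; lra.
  lra.
have r_ge1 : 1 <= r%:R :> R by rewrite ler1n.
have n_ge1 : 1 <= n%:R :> R by rewrite ler1n.
have le_d' : mu * r%:R * ln (r%:R / (delta / 2)) <= d%:R.
  have -> : r%:R / (delta / 2) = 2 * r%:R / delta by field; rewrite gt_eqF.
  apply: weaken le_d.
  by rewrite ler_pdivlMr // mul1r; lra.
have le_s' : mu * r%:R * ln (r%:R / (delta / (2 * n%:R))) <= s%:R.
  have -> : r%:R / (delta / (2 * n%:R)) = 2 * r%:R * n%:R / delta.
    by field; rewrite !gt_eqF ?ltr0n.
  apply: weaken le_s.
  by rewrite ler_pdivlMr // mul1r; nra.
exists [set w : mcnus_omega m n d s | ~~ (\rank (rowsub w.1 Vb) < r)%N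
                                     && [forall i, ~~ (\rank (rowsub (w.2 i) Ub) < r)%N]].
split=> [w|].
  rewrite inE -leqNgt => /andP[rk_cols /forallP rk_rows].
  apply: (mcnus_success_of_full_rank rkM Ub_span Vb_span) => [i||i].
  - by rewrite invr_gt0 ltr0n.
  - by apply/eqP; rewrite eqn_leq rank_leq_col rk_cols.
  - by apply/eqP; rewrite eqn_leq rank_leq_col leqNgt rk_rows.
(* The column sample fails for a fraction delta/2, each row sample for delta/(2n). *)
have := union_bound_ffun 'I_n (card_rowsub_deficient_le Vb_orth r_gt0 incV _ le_d')
  (card_rowsub_deficient_le Ub_orth r_gt0 incU _ le_s').
rewrite card_ord cardsT (_ : 1 - delta / 2 - n%:R * (delta / (2 * n%:R)) = 1 - delta) //.
  by apply; rewrite divr_gt0 ?mulr_gt0 ?ltr0n.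
by field; rewrite gt_eqF ?ltr0n.
Qed.
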